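(* Let $\mathbb{F}_q$ be a finite field of characteristic $p$, let $r,v,k,t$ be positive integers, and let $f(x):=x^r h_k(x^v)^t$ where $h_k(x):=x^{k-1}+x^{k-2}+\dots+1$. Let $s:=\gcd(v,q-1)$, $d:=(q-1)/s$ and $e:=v/s$. Then $f$ permutes $\mathbb{F}_q$ if and only if all of the following hold: (1) $\gcd(r,s)=\gcd(d,k)=1$; (2) $\gcd(d,2r+vt(k-1))\le 2$; (3) $k^{st}\equiv (-1)^{(d+1)(r+1)}\pmod{p}$; (4) the function $g(x):=x^r\big((1-x^{ek})/(1-x^e)\big)^{st}$ is injective on $\mu_d\setminus\mu_1$; (5) $(-1)^{(d+1)(r+1)}\notin g(\mu_d\setminus\mu_1)$.
   Context: $\mu_n$ denotes the set of $n$-th roots of unity in $\mathbb{F}_q$ (so $\mu_1=\{1\}$). A polynomial permutes $\mathbb{F}_q$ if the induced map $\mathbb{F}_q\to\mathbb{F}_q$ is a bijection. Note $\gcd(d,e)=1$. *)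

From HB Require Import structures.
From mathcomp Require Import all_boot all_order all_algebra all_field.
Set Implicit Arguments. Unset Strict Implicit. Unset Printing Implicit Defensive.
Import Order.TTheory GRing.Theory Num.Theory.
Local Open Scope ring_scope.

Definition hk (R : comRingType) (k : nat) (x : R) : R := \sum_(i < k) x ^+ i.

Definition fpoly (R : comRingType) (r v k t : nat) (x : R) : R :=
  x ^+ r * (hk k (x ^+ v)) ^+ t.

Definition gfun (F : fieldType) (r e k s t : nat) (x : F) : F :=
  x ^+ r * ((1 - x ^+ (e * k)) / (1 - x ^+ e)) ^+ (s * t).

Definition mu_nontriv (F : finFieldType) (n : nat) : {set F} :=
  [set x : F | (x ^+ n == 1) && (x != 1)].

From HB Require Import structures.
From mathcomp Require Import all_boot all_order all_algebra all_field.
From mathcomp Require Import cyclic.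
From mathcomp Require Import zify.
Set Implicit Arguments. Unset Strict Implicit. Unset Printing Implicit Defensive.
Import Order.TTheory GRing.Theory Num.Theory.
Local Open Scope ring_scope.

(* Since [x^v = (x^s)^e], f has the shape [x^r H(x^s)] with
   [H(y) = h_k(y^e)^t], and the criterion of Akbary, Ghioca and Wang applies: f permutes
   F_q iff [gcd(r, s) = 1] and [phi(y) = y^r H(y)^s] permutes [mu_d]; this rests on
   [f(x)^s = phi(x^s)] and [f(z x) = z^r f(x)] for [z] in [mu_s].
   As [gcd(e, d) = 1], [h_k(y^e) = (1 - y^(ek)) / (1 - y^e)] on [mu_d \ mu_1], so phi
   agrees with g there, while [phi(1) = k^(st)].  Hence (4) and (5) express injectivity
   of phi once [phi(1) = (-1)^((d+1)(r+1))], which is forced: the product of [phi(y)]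
   over [mu_d] is the product of the [y], and the factors [h_k(y^e)] multiply to [k].
   Condition [gcd(d, k) = 1] says that phi does not vanish on [mu_d], and (2) comes
   from [phi(y^-1) = y^-(2r + vt(k-1)) phi(y)]. *)

Lemma coprime_divn_gcdn a b : (0 < gcdn a b)%N ->
  coprime (a %/ gcdn a b) (b %/ gcdn a b).
Proof.
move=> g_gt0; rewrite /coprime -(eqn_pmul2l g_gt0) muln1 muln_gcdr.
by rewrite !(mulnC (gcdn a b)) !divnK ?dvdn_gcdl ?dvdn_gcdr.
Qed.

Lemma eqz_mod_pchar (R : nzRingType) p (a b : int) : p \in [pchar R] ->
  (a == b %[mod p%:Z])%Z = (a%:~R == b%:~R :> R).
Proof. by move=> pch; rewrite eqz_mod_dvd (dvdz_pcharf pch) rmorphB subr_eq0. Qed.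

Section UnityRoots.
Variable F : fieldType.
Implicit Types (w y z : F) (a b d j m : nat).

Lemma expr_dvdn_eq1 z m a : z ^+ m = 1 -> (m %| a)%N -> z ^+ a = 1.
Proof. by move=> zm /dvdnP[c ->]; rewrite mulnC exprM zm expr1n. Qed.

Lemma expr_gcdn_eq1 z a b : z ^+ a = 1 -> z ^+ b = 1 -> z ^+ gcdn a b = 1.
Proof.
case: a => [|a] za zb; first by rewrite gcd0n.
have [u _ /dvdnP[c Hc]] := Bezoutl b (ltn0Sn a).
have : z ^+ (gcdn a.+1 b + u * b) = 1 by rewrite Hc mulnC exprM za expr1n.
by rewrite exprD mulnC exprM zb expr1n mulr1.
Qed.

Lemma coprime_expr_eq1 z a b : coprime a b -> z ^+ a = 1 -> z ^+ b = 1 -> z = 1.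
Proof. by move=> /eqP cab za zb; have := expr_gcdn_eq1 za zb; rewrite cab expr1. Qed.

Lemma unity_root_neq0 d y : (0 < d)%N -> y \in d.-unity_root -> y != 0.
Proof.
move=> d_gt0 /unity_rootP yd; apply: contra_eq_neq yd => ->.
by rewrite expr0n gtn_eqF // eq_sym oner_neq0.
Qed.

Lemma unity_rootX d j y : y \in d.-unity_root -> y ^+ j \in d.-unity_root.
Proof. by move=> /unity_rootP yd; apply/unity_rootP; rewrite exprAC yd expr1n. Qed.

Lemma prim_root_expr_unity d w i : d.-primitive_root w -> w ^+ i \in d.-unity_root.
Proof. by move=> wp; apply/unity_rootX/unity_rootP/prim_expr_order. Qed.

Lemma prim_root_neq1 m z : (1 < m)%N -> m.-primitive_root z -> z != 1.
Proof.
move=> m_gt1 zp; apply: contraTneq m_gt1 => z1.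
by move: (prim_order_dvd zp 1); rewrite z1 expr1n eqxx dvdn1 => /eqP ->.
Qed.

Lemma expr_unity_inj d j :
  coprime j d -> {in d.-unity_root &, injective (fun y => y ^+ j)}.
Proof.
move=> cjd y1 y2 y1_mu y2_mu /= E.
have [d0|d_gt0] := posnP d.
  by move: cjd E; rewrite d0 /coprime gcdn0 => /eqP ->; rewrite !expr1.
have y20 := unity_root_neq0 d_gt0 y2_mu.
apply: divr1_eq; apply: coprime_expr_eq1 cjd _ _.
  by rewrite expr_div_n E divff ?expf_neq0.
by rewrite expr_div_n (unity_rootP y1_mu) (unity_rootP y2_mu) divr1.
Qed.

Lemma coprime_expr_unity_surj z r s : coprime r s -> (0 < s)%N -> z ^+ s = 1 ->
  exists2 w, w ^+ s = 1 & w ^+ r = z.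
Proof.
move=> crs s_gt0 zs; have [a _ /dvdnP[c hc]] := Bezoutl r s_gt0.
rewrite gcdnC (eqP crs) in hc.
have z0 : z != 0 by apply: (unity_root_neq0 s_gt0); apply/unity_rootP.
(* [s] divides [1 + a r], so [z ^+ (a r)] is the inverse of [z]. *)
have zE : z * z ^+ (a * r) = 1 by rewrite -exprS -add1n hc mulnC exprM zs expr1n.
exists (z ^+ a)^-1; first by rewrite exprVn -exprM mulnC exprM zs expr1n invr1.
rewrite exprVn -exprM; apply: (mulIf (expf_neq0 (a * r) z0)).
by rewrite mulVf ?expf_neq0 // zE.
Qed.

Lemma prod_prim_root_perm d w (G sigma : F -> F) : d.-primitive_root w ->
  {in d.-unity_root, forall y, sigma y \in d.-unity_root} ->
  {in d.-unity_root &, injective sigma} ->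
  \prod_(i < d) G (sigma (w ^+ i)) = \prod_(i < d) G (w ^+ i).
Proof.
move=> wp sigma_mu sigma_inj.
have sigma_w (i : 'I_d) : (sigma (w ^+ i)) ^+ d = 1.
  exact/unity_rootP/sigma_mu/prim_root_expr_unity.
pose tau (i : 'I_d) := sval (prim_rootP wp (sigma_w i)).
have tauE (i : 'I_d) : sigma (w ^+ i) = w ^+ tau i := svalP (prim_rootP wp (sigma_w i)).
have tau_inj : injective tau.
  move=> i j /(congr1 (fun l : 'I_d => w ^+ l)); rewrite -!tauE.
  move=> /(sigma_inj _ _ (prim_root_expr_unity _ wp) (prim_root_expr_unity _ wp)) /eqP.
  by rewrite (eq_prim_root_expr wp) !modn_small ?ltn_ord // => /eqP /val_inj.
by rewrite (eq_bigr _ (fun i _ => congr1 G (tauE i))) [RHS](reindex_inj tau_inj).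
Qed.

Lemma prod_prim_root_powers d w : d.-primitive_root w ->
  \prod_(i < d) w ^+ i = (-1) ^+ d.+1.
Proof.
move=> wp; have d_gt0 := prim_order_gt0 wp.
have := congr1 (fun p => p.[0]) (factor_Xn_sub_1 wp).
rewrite /= horner_prod big_mkord.
rewrite (eq_bigr (fun i : 'I_d => -1 * w ^+ i)); last first.
  by move=> i _; rewrite hornerXsubC sub0r mulN1r.
rewrite big_split /= prodr_const card_ord !hornerE expr0n gtn_eqF // sub0r => E.
by rewrite -[LHS]mul1r -{1}(sqrr_sign F d) expr2 -mulrA E exprSr.
Qed.

End UnityRoots.

Lemma hk1 (R : comNzRingType) k : hk k (1 : R) = k%:R.
Proof. by rewrite /hk (eq_bigr (fun=> 1)) ?sumr_const ?card_ord // => i _; rewrite expr1n. Qed.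

Lemma hk_eq0 (F : fieldType) k (a : F) : a != 1 -> (hk k a == 0) = (a ^+ k == 1).
Proof. by move=> a1; rewrite -[RHS]subr_eq0 subrX1 mulf_eq0 subr_eq0 (negPf a1). Qed.

Lemma hk_divE (F : fieldType) k (a : F) : a != 1 -> hk k a = (1 - a ^+ k) / (1 - a).
Proof.
move=> a1; rewrite -[1 - a ^+ k]opprB -[1 - a]opprB invrN mulrNN subrX1.
by rewrite [(a - 1) * _]mulrC mulfK // subr_eq0.
Qed.

Lemma hkV (F : fieldType) k (a : F) : a != 0 -> hk k a^-1 * a ^+ k.-1 = hk k a.
Proof.
move=> a0; case: k => [|k]; first by rewrite /hk !big_ord0 mul0r.
rewrite /hk mulr_suml (reindex_inj rev_ord_inj) /=; apply: eq_bigr => i _.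
by rewrite subSS exprVn -[in a ^+ k](subnK (leq_ord i)) exprD mulrA mulVf ?expf_neq0 ?mul1r.
Qed.

Lemma prod_hk_prim_root (F : fieldType) d k (w : F) : d.-primitive_root w ->
  coprime k d -> \prod_(i < d) hk k (w ^+ i) = k%:R.
Proof.
move=> wp ckd.
(* [G] is [1 - y] made nonzero at [y = 1], so that [hk k y * G y] is a multiple of
   [G (y ^+ k)] on all of [mu_d], and [y |-> y ^+ k] permutes [mu_d]. *)
pose G (y : F) := if y == 1 then 1 else 1 - y.
have hkG y : y \in d.-unity_root ->
    hk k y * G y = (if y == 1 then k%:R else 1) * G (y ^+ k).
  move=> y_mu; rewrite /G; have [->|y1] := eqVneq y 1.
    by rewrite expr1n eqxx hk1 !mulr1.
  have yk1 : y ^+ k != 1.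
    by apply: contra_neq y1 => yk; apply: coprime_expr_eq1 ckd yk (unity_rootP y_mu).
  by rewrite (negPf yk1) mul1r -[1 - y]opprB -[1 - y ^+ k]opprB mulrN mulrC /hk -subrX1.
have G_neq0 : \prod_(i < d) G (w ^+ i) != 0.
  apply/prodf_neq0 => i _; rewrite /G.
  by case: (eqVneq (w ^+ i) 1) => [_|w1]; rewrite ?oner_neq0 // subr_eq0 eq_sym.
have c_prod : \prod_(i < d) (if w ^+ i == 1 then k%:R else 1) = k%:R :> F.
  rewrite (bigD1 (Ordinal (prim_order_gt0 wp))) //= expr0 eqxx big1 ?mulr1 // => i i0.
  rewrite -(prim_order_dvd wp) gtnNdvd ?ltn_ord // lt0n.
  by apply: contra i0 => /eqP i0; apply/eqP/val_inj.
apply: (mulIf G_neq0); rewrite -big_split /=.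
rewrite (eq_bigr _ (fun (i : 'I_d) _ => hkG _ (prim_root_expr_unity i wp))).
rewrite big_split /= c_prod.
rewrite (prod_prim_root_perm G (sigma := fun y => y ^+ k) wp) //.
  by move=> y; apply: unity_rootX.
exact: expr_unity_inj.
Qed.

Section FiniteFieldUnityRoots.
Variable F : finFieldType.
Local Notation n := #|F|.-1.

Lemma pred_card_gt0 : (0 < n)%N.
Proof. by have := finNzRing_gt1 F; case: #|F| => [|[]]. Qed.

Lemma expf_card_pred (x : F) : x != 0 -> x ^+ n = 1.
Proof.
move=> x0; apply: (mulfI x0); rewrite -exprS prednK ?expf_card ?mulr1 //.
exact: ltnW (finNzRing_gt1 F).
Qed.

Lemma finField_prim_root m : (m %| n)%N -> {z : F | m.-primitive_root z}.
Proof.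
have : has n.-primitive_root (enum (predC1 (0 : F))).
  apply: has_prim_root; rewrite ?pred_card_gt0 ?enum_uniq -?cardE ?cardC1 //.
  by apply/allP => x; rewrite mem_enum /= => x0; rewrite unity_rootE expf_card_pred.
move=> /hasP /sig2_eqW [w _ wp] m_dvd.
by exists (w ^+ (n %/ m)); apply: dvdn_prim_root.
Qed.

Lemma expr_unity_root_surj s d (y : F) : (s * d)%N = n -> y \in d.-unity_root ->
  exists2 x, x != 0 & x ^+ s = y.
Proof.
move=> sd /unity_rootP yd; have [w wp] := finField_prim_root (dvdnn n).
have d_gt0 : (0 < d)%N by move: pred_card_gt0; rewrite -sd muln_gt0 => /andP[].
have yn : y ^+ n = 1 by rewrite -sd mulnC exprM yd expr1n.
have [i yi] := prim_rootP wp yn.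
have : w ^+ (i * d) = 1 by rewrite exprM -yi yd.
move/eqP; rewrite -(prim_order_dvd wp) -[X in (X %| _)%N]sd dvdn_pmul2r // => /dvdnP[c ic].
exists (w ^+ c); last by rewrite -exprM -ic yi.
by rewrite expf_neq0 // (prim_root_eq0 wp) -lt0n pred_card_gt0.
Qed.

End FiniteFieldUnityRoots.

Definition permutes_unity_roots (F : fieldType) d (phi : F -> F) : Prop :=
  {in d.-unity_root, forall y, phi y \in d.-unity_root} /\
  {in d.-unity_root &, injective phi}.

Definition agw_map (R : comNzRingType) r s (H : R -> R) (x : R) := x ^+ r * H (x ^+ s).
Definition agw_restr (R : comNzRingType) r s (H : R -> R) (y : R) := y ^+ r * H y ^+ s.

Section AGWCriterion.
Variables (F : finFieldType) (r s d : nat) (H : F -> F).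
Hypotheses (r_gt0 : (0 < r)%N) (sd : (s * d)%N = #|F|.-1).
Local Notation f := (agw_map r s H).
Local Notation phi := (agw_restr r s H).

Let s_gt0 : (0 < s)%N.
Proof. by move: (pred_card_gt0 F); rewrite -sd muln_gt0 => /andP[]. Qed.

Let d_gt0 : (0 < d)%N.
Proof. by move: (pred_card_gt0 F); rewrite -sd muln_gt0 => /andP[]. Qed.

Let s_dvdn : (s %| #|F|.-1)%N.
Proof. by rewrite -sd dvdn_mulr. Qed.

Let exprs_unity (x : F) : x != 0 -> x ^+ s \in d.-unity_root.
Proof. by move=> x0; apply/unity_rootP; rewrite -exprM sd expf_card_pred. Qed.

Lemma agw_map0 : f 0 = 0.
Proof. by rewrite /agw_map expr0n gtn_eqF // mul0r. Qed.

Lemma agw_mapXs x : f x ^+ s = phi (x ^+ s).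
Proof. by rewrite /agw_map /agw_restr exprMn -!exprM [(r * s)%N]mulnC. Qed.

Lemma agw_mapM z x : z ^+ s = 1 -> f (z * x) = z ^+ r * f x.
Proof. by move=> zs; rewrite /agw_map !exprMn zs mul1r mulrA. Qed.

Lemma agw_restr_unity y : y \in d.-unity_root -> phi y != 0 -> phi y \in d.-unity_root.
Proof.
move=> /unity_rootP yd phi0; apply/unity_rootP.
have Hy0 : H y != 0.
  by apply: contraNneq phi0 => Hy0; rewrite /agw_restr Hy0 expr0n gtn_eqF // mulr0.
by rewrite exprMn -!exprM mulnC exprM yd expr1n mul1r sd expf_card_pred.
Qed.

Lemma agw_inj_coprime : injective f -> coprime r s.
Proof.
move=> f_inj; apply: contraT => rs_ncop.
have m_gt1 : (1 < gcdn r s)%N by rewrite ltn_neqAle eq_sym rs_ncop gcdn_gt0 r_gt0.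
have [z zp] := finField_prim_root (dvdn_trans (dvdn_gcdr r s) s_dvdn).
have zm := prim_expr_order zp.
have zs := expr_dvdn_eq1 zm (dvdn_gcdr r s).
have := f_inj (z * 1) 1; rewrite agw_mapM // (expr_dvdn_eq1 zm (dvdn_gcdl r s)).
by rewrite mul1r mulr1 => /(_ erefl) z1; move: (prim_root_neq1 m_gt1 zp); rewrite z1 eqxx.
Qed.

Lemma agw_inj_restr : injective f -> permutes_unity_roots d phi.
Proof.
move=> f_inj; have crs := agw_inj_coprime f_inj.
have f_neq0 x : x != 0 -> f x != 0.
  by move=> x0; apply: contra_neq x0 => fx0; apply: f_inj; rewrite fx0 agw_map0.
split=> [y y_mu | _ _ /(expr_unity_root_surj sd)[x1 x10 <-]
                      /(expr_unity_root_surj sd)[x2 x20 <-]].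
  have [x x0 xs] := expr_unity_root_surj sd y_mu.
  by apply: agw_restr_unity => //; rewrite -xs -agw_mapXs expf_neq0 ?f_neq0.
rewrite -!agw_mapXs => E.
have zs : (f x1 / f x2) ^+ s = 1 by rewrite expr_div_n E divff ?expf_neq0 ?f_neq0.
have [w ws wr] := coprime_expr_unity_surj crs s_gt0 zs.
have -> : x1 = w * x2 by apply: f_inj; rewrite agw_mapM // wr divfK ?f_neq0.
by rewrite exprMn ws mul1r.
Qed.

Lemma agw_restr_inj : coprime r s -> permutes_unity_roots d phi -> injective f.
Proof.
move=> crs [phi_mu phi_inj].
have f_neq0 x : x != 0 -> f x != 0.
  move=> x0; have := unity_root_neq0 d_gt0 (phi_mu _ (exprs_unity x0)).
  by rewrite -agw_mapXs expf_eq0 s_gt0.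
move=> x1 x2; have [-> E|x10 E] := eqVneq x1 0.
  have [->//|x20] := eqVneq x2 0.
  by move: (f_neq0 x2 x20); rewrite -E agw_map0 eqxx.
have x20 : x2 != 0.
  by apply: contraNneq (f_neq0 x1 x10) => x20; rewrite E x20 agw_map0 eqxx.
have Es : x1 ^+ s = x2 ^+ s.
  by apply: phi_inj; rewrite ?exprs_unity // -!agw_mapXs E.
have zs : (x1 / x2) ^+ s = 1 by rewrite expr_div_n Es divff ?expf_neq0.
have x1E : x1 = x1 / x2 * x2 by rewrite divfK.
have zr : (x1 / x2) ^+ r = 1.
  by apply: (mulIf (f_neq0 x2 x20)); rewrite mul1r -agw_mapM // -x1E.
by rewrite x1E (coprime_expr_eq1 crs zr zs) mul1r.
Qed.

Theorem agw_criterion : injective f <-> coprime r s /\ permutes_unity_roots d phi.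
Proof.
split=> [f_inj | [crs phi_perm]]; last exact: agw_restr_inj.
by split; [apply: agw_inj_coprime | apply: agw_inj_restr].
Qed.

End AGWCriterion.

Lemma mu_nontrivE (F : finFieldType) d (y : F) :
  (y \in mu_nontriv F d) = (y \in d.-unity_root) && (y != 1).
Proof. by rewrite inE -unity_rootE. Qed.

Definition hk_twist (R : comNzRingType) e k t (y : R) := hk k (y ^+ e) ^+ t.

Lemma fpoly_agw (R : comNzRingType) r e s k t :
  fpoly r (e * s) k t =1 agw_map r s (hk_twist e k t : R -> R).
Proof. by move=> x; rewrite /fpoly /agw_map /hk_twist -exprM mulnC. Qed.

Section HkTwist.
Variables (F : finFieldType) (r s d e k t : nat).
Hypotheses (r_gt0 : (0 < r)%N) (t_gt0 : (0 < t)%N).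
Hypotheses (sd : (s * d)%N = #|F|.-1) (ed : coprime e d).
Local Notation phi := (agw_restr r s (hk_twist e k t) : F -> F).
Local Notation g := (gfun r e k s t : F -> F).
Local Notation sgn := ((-1) ^+ ((d + 1) * (r + 1)) : F).
Local Notation N := (2 * r + e * s * t * (k - 1))%N.

Let d_gt0 : (0 < d)%N.
Proof. by move: (pred_card_gt0 F); rewrite -sd muln_gt0 => /andP[]. Qed.

Let s_gt0 : (0 < s)%N.
Proof. by move: (pred_card_gt0 F); rewrite -sd muln_gt0 => /andP[]. Qed.

Let d_dvdn : (d %| #|F|.-1)%N.
Proof. by rewrite -sd dvdn_mull. Qed.

Let expr_e_neq1 (y : F) : y \in d.-unity_root -> y != 1 -> y ^+ e != 1.
Proof.
by move=> y_mu; apply: contra_neq => ye; apply: coprime_expr_eq1 ed ye (unity_rootP y_mu).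
Qed.

Lemma hk_twist_restrE (y : F) : phi y = y ^+ r * hk k (y ^+ e) ^+ (s * t).
Proof. by rewrite /agw_restr /hk_twist -exprM mulnC. Qed.

Lemma hk_twist_restr1 : phi 1 = (k ^ (s * t))%:R.
Proof. by rewrite hk_twist_restrE !expr1n hk1 mul1r natrX. Qed.

Lemma hk_twist_restr_gfun (y : F) : y \in d.-unity_root -> y != 1 -> phi y = g y.
Proof.
by move=> y_mu y1; rewrite hk_twist_restrE (hk_divE _ (expr_e_neq1 y_mu y1)) -exprM.
Qed.

Lemma coprime_hk_twist_neq0 :
  coprime d k <-> {in d.-unity_root, forall y : F, y != 1 -> hk k (y ^+ e) != 0}.
Proof.
split=> [cdk y y_mu y1 | hk_neq0].
  have cekd : coprime (e * k) d by rewrite coprimeMl ed coprime_sym.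
  rewrite hk_eq0 ?expr_e_neq1 // -exprM; apply: contra_neq y1 => yek.
  exact: coprime_expr_eq1 cekd yek (unity_rootP y_mu).
apply: contraT => dk_ncop.
have m_gt1 : (1 < gcdn d k)%N by rewrite ltn_neqAle eq_sym dk_ncop gcdn_gt0 d_gt0.
have [z zp] := finField_prim_root (dvdn_trans (dvdn_gcdl d k) d_dvdn).
have zep : (gcdn d k).-primitive_root (z ^+ e).
  by rewrite prim_root_exp_coprime // (coprime_dvdr (dvdn_gcdl d k) ed).
have z_mu : z \in d.-unity_root.
  exact/unity_rootP/(expr_dvdn_eq1 (prim_expr_order zp) (dvdn_gcdl d k)).
move: (hk_neq0 z z_mu (prim_root_neq1 m_gt1 zp)).
rewrite hk_eq0 ?(prim_root_neq1 m_gt1 zep) //.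
by rewrite (expr_dvdn_eq1 (prim_expr_order zep) (dvdn_gcdr d k)) eqxx.
Qed.

Lemma hk_twist_restrV (y : F) : y != 0 -> phi y^-1 * y ^+ N = phi y.
Proof.
move=> y0; have ye0 : y ^+ e != 0 := expf_neq0 e y0.
have -> : N = (r + r + e * (k.-1 * (s * t)))%N by rewrite subn1; nia.
rewrite !hk_twist_restrE -(hkV k ye0) exprMn !exprVn !exprD -!exprM.
set A := hk k _ ^+ _; set C := y ^+ (_ * _).
by rewrite mulrAC -!mulrA mulKf ?expf_neq0 // [C * _]mulrC.
Qed.

Lemma hk_twist_gcd_le2 : {in d.-unity_root &, injective phi} -> (gcdn d N <= 2)%N.
Proof.
move=> phi_inj; rewrite leqNgt; apply/negP => m_gt2.
have [z zp] := finField_prim_root (dvdn_trans (dvdn_gcdl d N) d_dvdn).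
have zm := prim_expr_order zp.
have z_mu : z \in d.-unity_root by exact/unity_rootP/(expr_dvdn_eq1 zm (dvdn_gcdl d N)).
have z0 := unity_root_neq0 d_gt0 z_mu.
have zV_mu : z^-1 \in d.-unity_root.
  by apply/unity_rootP; rewrite exprVn (unity_rootP z_mu) invr1.
have zVz : z^-1 = z.
  apply: phi_inj => //; rewrite -[RHS](hk_twist_restrV z0).
  by rewrite (expr_dvdn_eq1 zm (dvdn_gcdr d N)) mulr1.
move: (prim_order_dvd zp 2); rewrite expr2 -{1}zVz mulVf // eqxx.
by move/(dvdn_leq (isT : (0 < 2)%N)); rewrite leqNgt m_gt2.
Qed.

(* Comparing [\prod_(y in mu_d) phi y] with [\prod_(y in mu_d) y]: the factors
   [hk k (y ^+ e)] contribute [k] since [y |-> y ^+ e] permutes [mu_d]. *)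
Lemma hk_twist_restr1_sign : coprime d k -> permutes_unity_roots d phi -> phi 1 = sgn.
Proof.
move=> cdk [phi_mu phi_inj]; have [w wp] := finField_prim_root d_dvdn.
have prod_phi : \prod_(i < d) phi (w ^+ i) = \prod_(i < d) w ^+ i.
  exact: (prod_prim_root_perm id (sigma := phi) wp).
have prod_hk : \prod_(i < d) hk k ((w ^+ i) ^+ e) = k%:R.
  rewrite (prod_prim_root_perm (hk k) (sigma := fun y => y ^+ e) wp).
  - by rewrite prod_hk_prim_root // coprime_sym.
  - by move=> y; apply: unity_rootX.
  - exact: expr_unity_inj.
move: prod_phi; rewrite (eq_bigr _ (fun i _ => hk_twist_restrE _)) big_split /=.
rewrite !prodrXl prod_hk -natrX -hk_twist_restr1 (prod_prim_root_powers wp) => E.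
have sign_sqr : (-1) ^+ d.+1 * (-1) ^+ d.+1 = 1 :> F.
  by rewrite -exprMn mulrNN mulr1 expr1n.
by rewrite exprM !addn1 exprSr -{2}E mulrA -exprMn sign_sqr expr1n mul1r.
Qed.

Theorem hk_twist_perm_iff : permutes_unity_roots d phi <->
  [/\ coprime d k, (gcdn d N <= 2)%N, phi 1 = sgn,
      {in mu_nontriv F d &, injective g} & sgn \notin g @: mu_nontriv F d].
Proof.
have one_mu : (1 : F) \in d.-unity_root by apply/unity_rootP; rewrite expr1n.
(* Condition (2) follows from the others, so the converse does not use it. *)
split=> [[phi_mu phi_inj] | [cdk _ phi1 g_inj g1]].
  have cdk : coprime d k.
    apply/coprime_hk_twist_neq0 => y y_mu _.
    apply: contraNneq (unity_root_neq0 d_gt0 (phi_mu y y_mu)) => hk0.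
    by rewrite hk_twist_restrE hk0 expr0n muln_eq0 !gtn_eqF // mulr0.
  have phi1 := hk_twist_restr1_sign cdk (conj phi_mu phi_inj).
  split=> //; first exact: hk_twist_gcd_le2.
    move=> y1 y2; rewrite !mu_nontrivE => /andP[y1_mu y11] /andP[y2_mu y21].
    by rewrite -!hk_twist_restr_gfun //; apply: phi_inj.
  apply/imsetP => -[y]; rewrite mu_nontrivE => /andP[y_mu y1].
  rewrite -hk_twist_restr_gfun // -phi1 => /esym /(phi_inj _ _ y_mu one_mu) y1E.
  by rewrite y1E eqxx in y1.
have phi_neq0 y : y \in d.-unity_root -> phi y != 0.
  move=> y_mu; have [->|y1] := eqVneq y 1; first by rewrite phi1 signr_eq0.
  rewrite hk_twist_restrE mulf_neq0 ?expf_neq0 ?(unity_root_neq0 d_gt0 y_mu) //.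
  exact: (proj1 coprime_hk_twist_neq0 cdk y y_mu y1).
split=> [y y_mu | y1 y2 y1_mu y2_mu]; first by apply: agw_restr_unity; rewrite ?phi_neq0.
have [-> | y1n1] := eqVneq y1 1; have [-> | y2n1] := eqVneq y2 1 => //.
- rewrite phi1 hk_twist_restr_gfun // => E; case/negP: g1.
  by apply/imsetP; exists y2; rewrite // mu_nontrivE y2_mu y2n1.
- rewrite phi1 hk_twist_restr_gfun // => E; case/negP: g1.
  by apply/imsetP; exists y1; rewrite // mu_nontrivE y1_mu y1n1.
rewrite !hk_twist_restr_gfun // => E.
by apply: g_inj; rewrite // mu_nontrivE ?y1_mu ?y2_mu ?y1n1 ?y2n1.
Qed.

End HkTwist.

Theorem proposition3p2 (F : finFieldType) (p : nat) (r v k t : nat) :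
  p \in [pchar F] ->
  (0 < r)%N -> (0 < v)%N -> (0 < k)%N -> (0 < t)%N ->
  let q := #|F| in
  let s := gcdn v q.-1 in
  let d := (q.-1 %/ s)%N in
  let e := (v %/ s)%N in
  bijective (fpoly r v k t : F -> F) <->
  [/\ gcdn r s = 1%N /\ gcdn d k = 1%N,
      (gcdn d (2 * r + v * t * (k - 1)) <= 2)%N,
      ((k ^ (s * t))%:Z == (-1) ^+ ((d + 1) * (r + 1)) %[mod (p%:Z)])%Z,
      {in mu_nontriv F d &, injective (gfun r e k s t : F -> F)}
    & (-1) ^+ ((d + 1) * (r + 1)) \notin (gfun r e k s t : F -> F) @: mu_nontriv F d].
Proof.
move=> pch r_gt0 _ _ t_gt0 q s d e.
have sd : (s * d)%N = q.-1 by rewrite mulnC divnK ?dvdn_gcdr.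
have ves : v = (e * s)%N by rewrite divnK ?dvdn_gcdl.
have ed : coprime e d by apply: coprime_divn_gcdn; rewrite gcdn_gt0 pred_card_gt0 orbT.
have f_agw := fpoly_agw (R := F) r e s k t.
have bij_agw : bijective (fpoly r (e * s) k t : F -> F) <->
               injective (agw_map r s (hk_twist e k t) : F -> F).
  by split=> [/bij_inj/eq_inj/(_ f_agw) | /eq_inj/(_ (fsym f_agw))/injF_bij].
rewrite (eqz_mod_pchar _ _ pch) -pmulrn [X in _ == X]rmorphXn rmorphN rmorph1.
rewrite -(hk_twist_restr1 F r s e k t) ves.
apply: (iff_trans bij_agw); apply: (iff_trans (agw_criterion _ r_gt0 sd)).
have phi_iff := hk_twist_perm_iff k r_gt0 t_gt0 sd ed.
split=> [[/eqP crs /phi_iff[/eqP cdk c2 /eqP phi1 g_inj g1]] |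
         [[crs cdk] c2 /eqP phi1 g_inj g1]]; first by split.
by split; [exact/eqP | apply/phi_iff; split=> //; exact/eqP].
Qed.
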